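(* Let $\mathcal{X}$ be a symmetric configuration $v_3$ having a blocking set $Q$ of cardinality $q$, where $\lceil v/3\rceil\leq q<\lfloor v/2\rfloor$. Then $\mathcal{X}$ also has a blocking set of cardinality $q+1$.
   Context: A symmetric configuration $v_3$ consists of a set of $v$ points and a collection of $v$ blocks, each block being a 3-element subset of the points, such that every point lies in exactly 3 blocks and any two distinct points lie in at most one common block. A blocking set of such a configuration is a subset $Q$ of the points such that every block contains at least one point of $Q$ and at least one point not in $Q$. *)

From mathcomp Require Import all_boot.
Set Implicit Arguments. Unset Strict Implicit. Unset Printing Implicit Defensive.

Definition sym_config_v3 (T : finType) (blocks : {set {set T}}) : Prop :=
  [/\ #|blocks| = #|T|,
      (forall b, b \in blocks -> #|b| = 3),
      (forall x : T, #|[set b in blocks | x \in b]| = 3) &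
      (forall x y : T, x != y -> #|[set b in blocks | (x \in b) && (y \in b)]| <= 1)].

Definition blocking_set (T : finType) (blocks : {set {set T}}) (Q : {set T}) : Prop :=
  forall b, b \in blocks -> (b :&: Q != set0) /\ (b :\: Q != set0).

From mathcomp Require Import all_boot.
From mathcomp Require Import zify.

Set Implicit Arguments.
Unset Strict Implicit.
Unset Printing Implicit Defensive.

(* Let X be a configuration v_3 with point set T (v = #|T|) and let Q be a
   blocking set with q = #|Q| < v/2.  We add to Q a point x outside Q that is
   not the unique non-Q point of any block; then every block still meets both
   x |: Q and its complement.  Such an x exists by counting:
   - every block b satisfies 1 <= #|b :&: Q| <= 2 (Q is blocking, #|b| = 3);
   - double counting incidences gives \sum_b #|b :&: Q| = 3q, so the set of
     "heavy" blocks, those meeting Q in two points, has at most 3q - v elements;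
   - each heavy block has a single point outside Q, so at most 3q - v points
     outside Q are forbidden, whereas v - q > 3q - v points lie outside Q. *)

Lemma card_bigcup_le (I T : finType) (A : {pred I}) (F : I -> {set T}) :
  (#|\bigcup_(i in A) F i| <= \sum_(i in A) #|F i|)%N.
Proof.
elim/big_ind2: _ => // [|m B n C Bm Cn]; first by rewrite cards0.
by rewrite (leq_trans (leq_card_setU B C)) ?leq_add.
Qed.

Lemma sum_pos_ge (I : finType) (A : {pred I}) (F : I -> nat) :
  (forall i, i \in A -> 0 < F i)%N ->
  (#|[set i in A | 2 <= F i]| + #|A| <= \sum_(i in A) F i)%N.
Proof.
move=> Fpos; rewrite -!sum1_card big_mkcond [X in _ + X]big_mkcond -big_split /=.
rewrite [X in (_ <= X)%N]big_mkcond /=.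
apply: leq_sum => i _; rewrite inE.
by case: (boolP (i \in A)) => //= /Fpos; case: (F i) => [|[|]].
Qed.

Lemma card_setI_sum (T : finType) (A B : {set T}) :
  #|A :&: B| = \sum_(x in B) (x \in A : nat).
Proof.
rewrite -sum1_card big_mkcond [RHS]big_mkcond /=.
by apply: eq_bigr => x _; rewrite in_setI; case: (x \in A); case: (x \in B).
Qed.

Lemma sum_card_setI (T : finType) (blocks : {set {set T}}) (Q : {set T}) :
  \sum_(b in blocks) #|b :&: Q| = \sum_(x in Q) #|[set b in blocks | x \in b]|.
Proof.
under eq_bigr do rewrite card_setI_sum.
rewrite exchange_big; apply: eq_bigr => x _.
have -> : [set b in blocks | x \in b] = [set b : {set T} | x \in b] :&: blocks.
  by apply/setP => b; rewrite !inE andbC.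
by rewrite card_setI_sum; apply: eq_bigr => b _; rewrite inE.
Qed.

Lemma blocking_setU1 (T : finType) (blocks : {set {set T}}) (Q : {set T}) x :
  blocking_set blocks Q -> x \notin Q ->
  (forall b, b \in blocks -> x \in b -> 2 <= #|b :\: Q|)%N ->
  blocking_set blocks (x |: Q).
Proof.
move=> Qbl xQ two_out b bB; have [meetQ missQ] := Qbl b bB.
rewrite -!card_gt0 in meetQ missQ *; split.
  by apply: leq_trans meetQ _; apply/subset_leq_card/setIS/subsetUr.
have -> : b :\: (x |: Q) = (b :\: Q) :\ x.
  by apply/setP => y; rewrite !inE negb_or; case: (y == x); case: (y \in Q).
have := cardsD1 x (b :\: Q); rewrite inE xQ /=.
by case: (boolP (x \in b)) => [/(two_out b bB)|_]; lia.
Qed.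

Section BlockingConfiguration.

Variables (T : finType) (blocks : {set {set T}}) (Q : {set T}).
Hypothesis block_size : forall b, b \in blocks -> #|b| = 3.
Hypothesis Q_blocking : blocking_set blocks Q.

Lemma card_outside b : b \in blocks -> #|b :\: Q| = 3 - #|b :&: Q|.
Proof. by move=> bB; have := cardsID Q b; rewrite (block_size bB); lia. Qed.

Definition heavy : {set {set T}} := [set b in blocks | 2 <= #|b :&: Q|]%N.

Lemma card_heavy :
  #|blocks| = #|T| -> (forall x, #|[set b in blocks | x \in b]| = 3) ->
  (#|heavy| + #|T| <= 3 * #|Q|)%N.
Proof.
move=> card_blocks degree; rewrite -card_blocks.
have -> : (3 * #|Q| = \sum_(b in blocks) #|b :&: Q|)%N.
  by rewrite sum_card_setI (eq_bigr _ (fun x _ => degree x)) sum_nat_const mulnC.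
by apply: sum_pos_ge => b bB; have [meetQ _] := Q_blocking bB; rewrite card_gt0.
Qed.

Definition forbidden : {set T} := \bigcup_(b in heavy) (b :\: Q).

(* Each heavy block contributes at most one forbidden point. *)
Lemma card_forbidden : (#|forbidden| <= #|heavy|)%N.
Proof.
rewrite /forbidden -[#|heavy|]sum1_card; apply: leq_trans (card_bigcup_le _ _) _.
apply: leq_sum => b; rewrite inE => /andP[bB heavy_b].
by rewrite card_outside //; lia.
Qed.

Lemma blocking_extend x :
  x \notin Q -> x \notin forbidden -> blocking_set blocks (x |: Q).
Proof.
move=> xQ xF; apply: blocking_setU1 => // b bB xb.
rewrite card_outside //; case: (boolP (b \in heavy)) => [hb | ].
  by case/bigcupP: xF; exists b; rewrite // inE xb xQ.
by rewrite inE bB /=; lia.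
Qed.

End BlockingConfiguration.

Theorem mainTheorem1 (T : finType) (blocks : {set {set T}}) (Q : {set T}) :
  sym_config_v3 blocks -> blocking_set blocks Q ->
  (#|T| %/ 3 + (#|T| %% 3 != 0) <= #|Q|)%N -> (#|Q| < #|T| %/ 2)%N ->
  exists Q' : {set T}, blocking_set blocks Q' /\ #|Q'| = #|Q|.+1.
Proof.
move=> [card_blocks block_size degree _] Q_blocking _ small_Q.
have few_heavy := card_heavy Q_blocking card_blocks degree.
have few_forbidden := card_forbidden Q block_size.
set F := forbidden blocks Q in few_forbidden *.
(* 3q - v < v - q, so some point outside Q is not forbidden. *)
have : (0 < #|~: Q :\: F|)%N.
  have := cardsID F (~: Q); have := subset_leq_card (subsetIr (~: Q) F).
  have := cardsC Q; have := leq_divM #|T| 2; lia.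
rewrite card_gt0 => /set0Pn[x]; rewrite !inE => /andP[xF xQ].
exists (x |: Q); split; first exact: blocking_extend.
by rewrite cardsU1 xQ.
Qed.
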